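(* Let $D=d$ and let ${\bf v}=\{v_1,\dots,v_d\}$ be linearly independent unit vectors in $\mathbb{R}^d$ such that for every $i\in\{1,\dots,d\}$ the tuple ${\bf v}\setminus i$ is completely irrational, i.e. $\overline{A_{{\bf v}\setminus i}(\mathcal{L}_{{\bf v}\setminus i})}=[0,\infty)^{d-1}$. Then for every $i\in\{1,\dots,d\}$ and all $M,\epsilon>0$ the set $$\Lambda_{M,\epsilon,i}:=\{n\in\mathbb{Z}^D:\ 0<v_k\cdot n<\epsilon\ \forall k\neq i,\ \ v_i\cdot n>M\}$$ is non-empty.
   Context: ${\bf v}\setminus i:=\{v_k\}_{k\ne i}$, $\mathcal{L}_{{\bf v}\setminus i}:=\{n\in\mathbb{Z}^D: v_k\cdot n\ge0\ \forall k\ne i\}$, and $A_{{\bf v}\setminus i}:\mathbb{R}^D\to\mathbb{R}^{d-1}$, $z\mapsto(v_k\cdot z)_{k\ne i}$. *)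

From HB Require Import structures.
From mathcomp Require Import all_boot all_order all_algebra.
From mathcomp Require Import all_classical all_reals all_analysis.
Set Implicit Arguments. Unset Strict Implicit. Unset Printing Implicit Defensive.
Import Order.TTheory GRing.Theory Num.Theory.
Import numFieldNormedType.Exports.
Local Open Scope classical_set_scope.
Local Open Scope ring_scope.

Section Defs.
Variable R : realType.

Definition dotR (d : nat) (u w : 'rV[R]_d) : R := \sum_(j < d) u 0 j * w 0 j.

Definition intv (d : nat) (m : 'rV[int]_d) : 'rV[R]_d :=
  map_mx (fun z : int => z%:~R) m.

Definition Lv (n : nat) (v : 'I_n.+1 -> 'rV[R]_n.+1) (i : 'I_n.+1)
  : set 'rV[int]_n.+1 :=
  [set m | forall k, k != i -> 0 <= dotR (v k) (intv m)].

(* A_{v \ i} : R^d -> R^(d-1), z |-> (v_k . z)_{k <> i}, the coordinates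
   k <> i being enumerated increasingly via lift i *)
Definition Av (n : nat) (v : 'I_n.+1 -> 'rV[R]_n.+1) (i : 'I_n.+1)
  (z : 'rV[R]_n.+1) : 'rV[R]_n :=
  \row_(k < n) dotR (v (lift i k)) z.

Definition completely_irrational (n : nat) (v : 'I_n.+1 -> 'rV[R]_n.+1)
  (i : 'I_n.+1) : Prop :=
  closure [set Av v i (intv m) | m in Lv v i] = [set x : 'rV[R]_n | forall k, 0 <= x 0 k].

Definition Lambda (n : nat) (v : 'I_n.+1 -> 'rV[R]_n.+1) (M eps : R)
  (i : 'I_n.+1) : set 'rV[int]_n.+1 :=
  [set m | (forall k, k != i -> 0 < dotR (v k) (intv m) < eps)
           /\ M < dotR (v i) (intv m)].

End Defs.

From HB Require Import structures.
From mathcomp Require Import all_boot all_order all_algebra.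
From mathcomp Require Import all_classical all_reals all_analysis.
From mathcomp Require Import lra zify.
Set Implicit Arguments. Unset Strict Implicit. Unset Printing Implicit Defensive.
Import Order.TTheory GRing.Theory Num.Theory.
Import numFieldNormedType.Exports.
Local Open Scope classical_set_scope.
Local Open Scope ring_scope.

(* The v_k form an invertible matrix, so a nonzero integer vector cannot have
   all |v_k . x| below some gap c > 0.  Complete irrationality of v \ i yields
   a lattice point u with v_k . u close to eps/2 for all k <> i, and a nonzero
   lattice point m with 0 < v_k . m < eta for all k <> i; for eta <= c the gap
   forces |v_i . m| >= c.  Hence u + K sgn(v_i . m) m lies in Lambda as soon as
   K c > |M| + |v_i . u| and K eta <= eps/4. *)

Lemma dotR_intvDZ (R : realType) d (w : 'rV[R]_d) (u m : 'rV[int]_d) (z : int) :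
  dotR w (intv R (u + z *: m)) = dotR w (intv R u) + z%:~R * dotR w (intv R m).
Proof.
rewrite /dotR mulr_sumr -big_split; apply: eq_bigr => j _.
by rewrite !mxE intrD intrM mulrDr mulrCA.
Qed.

Lemma intr_norm_lt1_eq0 (R : numDomainType) (z : int) : `|z%:~R : R| < 1 -> z = 0.
Proof. by rewrite -intr_norm -[1 : R]/(1%:~R) ltr_int; lia. Qed.

Lemma dot_intv_gap (R : realType) n (v : 'I_n -> 'rV[R]_n) :
  row_free (\matrix_(k, j) v k 0 j) ->
  exists2 c : R, 0 < c & forall m : 'rV[int]_n,
    (forall k, `|dotR (v k) (intv R m)| < c) -> m = 0.
Proof.
set V := \matrix_(k, j) v k 0 j; rewrite row_free_unit => V_unit.
set W := invmx V.
set S := \sum_j \sum_k `|W j k|.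
have S_ge0 : 0 <= S by rewrite sumr_ge0 // => j _; rewrite sumr_ge0.
exists (S + 1)^-1; first by rewrite invr_gt0; lra.
move=> m m_small; apply/matrixP => z j; rewrite mxE [z]ord1.
apply: (@intr_norm_lt1_eq0 R).
(* |m_j| <= \sum_k |W j k| |v_k . m| < S / (S + 1) < 1 *)
have m_eq : (intv R m)^T = W *m (V *m (intv R m)^T) by rewrite mulKmx.
have Vm k : (V *m (intv R m)^T) k 0 = dotR (v k) (intv R m).
  by rewrite mxE; apply: eq_bigr => l _; rewrite !mxE.
have Wj_le : \sum_k `|W j k| <= S.
  rewrite /S [leRHS](bigD1 j) //= lerDl.
  by rewrite sumr_ge0 // => l _; rewrite sumr_ge0.
have Wj_ge0 : 0 <= \sum_k `|W j k| by rewrite sumr_ge0.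
move/matrixP/(_ j 0): m_eq; rewrite !mxE => ->.
apply: (le_lt_trans (ler_norm_sum _ _ _)).
apply: (@le_lt_trans _ _ (\sum_k `|W j k| * (S + 1)^-1)).
  apply: ler_sum => k _; rewrite normrM Vm ler_wpM2l //.
  exact/ltW/m_small.
by rewrite -mulr_suml ltr_pdivrMr; lra.
Qed.

Lemma completely_irrational_approx (R : realType) n
    (v : 'I_n.+1 -> 'rV[R]_n.+1) (i : 'I_n.+1) (x : 'rV[R]_n) (r : R) :
  completely_irrational v i -> (forall k, 0 <= x 0 k) -> 0 < r ->
  exists m, Lv v i m /\
    forall k, `|dotR (v (lift i k)) (intv R m) - x 0 k| < r.
Proof.
move=> ci x_ge0 r_gt0.
have : x \in closure [set Av v i (intv R m) | m in Lv v i] by rewrite ci inE.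
rewrite inE => /(_ (ball x r) (nbhsx_ballx x r r_gt0)).
move=> [y [[m Lm <-]] [_ near_x]]; exists m; split => // k.
by move: (near_x 0 k); rewrite /ball /= mxE distrC.
Qed.

Lemma completely_irrational_small_pos (R : realType) n
    (v : 'I_n.+1 -> 'rV[R]_n.+1) (i : 'I_n.+1) (eta : R) :
  completely_irrational v i -> 0 < eta ->
  exists m : 'rV[int]_n.+1, m != 0 /\
    forall k, 0 < dotR (v (lift i k)) (intv R m) < eta.
Proof.
case: n v i => [|n] v i ci eta_gt0.
  exists (const_mx 1); split; last by case.
  by apply/eqP => /matrixP/(_ 0 0); rewrite !mxE.
have [||m [_ near]] :=
  completely_irrational_approx (x := const_mx (eta / 2)) (r := eta / 2) ci.
- by move=> k; rewrite mxE; lra.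
- by rewrite divr_gt0.
have pos_small k : 0 < dotR (v (lift i k)) (intv R m) < eta.
  move: (near k); rewrite mxE ltr_distlC => /andP[lo hi].
  by apply/andP; split; lra.
exists m; split => //; apply/eqP => m0; move: (pos_small ord0).
by rewrite m0 /dotR big1 ?ltxx // => j _; rewrite !mxE mulr0.
Qed.

Lemma near_half_bounds (R : realFieldType) (eps e s : R) :
  `|e - eps / 2| < eps / 4 -> `|s| < eps / 4 -> 0 < e + s < eps.
Proof.
move=> e_near s_small; have : `|eps / 2 - (e + s)| < eps / 2.
  rewrite opprD addrA (le_lt_trans (ler_normB _ _)) // distrC.
  by apply: (lt_le_trans (ltrD e_near s_small)); lra.
by rewrite ltr_distlC => /andP[lo hi]; apply/andP; split; lra.
Qed.

Lemma completely_irrational_gap_step (R : realType) n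
    (v : 'I_n.+1 -> 'rV[R]_n.+1) (i : 'I_n.+1) (c eta : R) :
  (forall m : 'rV[int]_n.+1, (forall k, `|dotR (v k) (intv R m)| < c) -> m = 0) ->
  completely_irrational v i -> 0 < eta -> eta <= c ->
  exists2 m : 'rV[int]_n.+1, c <= `|dotR (v i) (intv R m)| &
    forall k, 0 < dotR (v (lift i k)) (intv R m) < eta.
Proof.
move=> gap ci eta_gt0 eta_le_c.
have [m [m_neq0 m_small]] := completely_irrational_small_pos ci eta_gt0.
exists m => //; rewrite leNgt; apply/negP => small_i.
move/eqP: m_neq0; apply; apply: gap => k.
have [k' ->|->] := unliftP i k => //.
by have /andP[d_gt0 d_lt] := m_small k'; rewrite gtr0_norm // (lt_le_trans d_lt).
Qed.

Lemma normr_sgM_le (R : realDomainType) (x y : R) : `|Num.sg x * y| <= `|y|.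
Proof. by rewrite normrM normr_sg; case: (x != 0); rewrite ?mul1r ?mul0r. Qed.

Lemma exists_nat_mulr_gt (R : archiRealFieldType) (x c : R) :
  0 < c -> exists2 K : nat, (0 < K)%N & x < K%:R * c.
Proof.
move=> c_gt0; exists (Num.truncn (x / c)).+1 => //.
by rewrite -ltr_pdivrMr // truncnS_gt.
Qed.

Lemma dotR_sgz_scale (R : realType) d (w : 'rV[R]_d) (u m : 'rV[int]_d)
    (t : R) (K : nat) :
  dotR w (intv R (u + (sgz t * K%:Z) *: m))
    = dotR w (intv R u) + Num.sg t * K%:R * dotR w (intv R m).
Proof. by rewrite dotR_intvDZ intrM -sgrEz. Qed.

Theorem mainTheorem17 (R : realType) (n : nat) (v : 'I_n.+1 -> 'rV[R]_n.+1) :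
  row_free (\matrix_(k < n.+1, j < n.+1) v k 0 j) ->
  (forall k, dotR (v k) (v k) = 1) ->
  (forall i, completely_irrational v i) ->
  forall (i : 'I_n.+1) (M eps : R), 0 < M -> 0 < eps ->
    Lambda v M eps i !=set0.
Proof.
move=> free _ ci i M eps M_gt0 eps_gt0.
have [c c_gt0 gap] := dot_intv_gap free.
have [||u [_ u_mid]] :=
  completely_irrational_approx (x := const_mx (eps / 2)) (r := eps / 4) (ci i).
- by move=> k; rewrite mxE; lra.
- by rewrite divr_gt0.
set a := dotR (v i) (intv R u).
have [K K_gt0 K_large] := exists_nat_mulr_gt (`|M| + `|a|) c_gt0.
pose eta := Num.min c (eps / 4 / K%:R).
have K_eta : K%:R * eta <= eps / 4.
  by rewrite mulrC -ler_pdivlMr ?ltr0n // ge_min lexx orbT.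
have [||m t_ge m_small] := completely_irrational_gap_step gap (ci i) (eta := eta).
- by rewrite lt_min c_gt0 !divr_gt0 ?ltr0n.
- by rewrite ge_min lexx.
set t := dotR (v i) (intv R m) in t_ge *.
exists (u + (sgz t * K%:Z) *: m); split; last first.
  rewrite dotR_sgz_scale -/a -/t -mulrA mulrCA -normrEsg.
  have := ler_norm M; have := ler_norm (- a); rewrite normrN.
  have := ler_wpM2l (ler0n _ K) t_ge; lra.
move=> k k_neq_i; have [k' ->|k_eq_i] := unliftP i k; last first.
  by rewrite k_eq_i eqxx in k_neq_i.
rewrite dotR_sgz_scale; apply: near_half_bounds.
  by move: (u_mid k'); rewrite mxE.
have /andP[d_gt0 d_lt] := m_small k'.
rewrite -mulrA (le_lt_trans (normr_sgM_le _ _)) // gtr0_norm ?mulr_gt0 ?ltr0n //.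
by apply: lt_le_trans K_eta; rewrite ltr_pM2l ?ltr0n.
Qed.
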